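(* Let $M$ be a $\delta$-no-regret algorithm for the (non-contextual) multi-armed bandit problem, and suppose the buyer plays according to Algorithm 1 built from $M$ (described in the context). Let $q_{\min}=\min_i q_i$. Then every seller strategy, even an adaptive one, receives expected total revenue at most ${\sf Mye}(\mathcal D)T+\frac{m\delta}{q_{\min}}$.
   Context: Model: a single seller and a single buyer interact for $T$ rounds, one item for sale per round. The buyer's value distribution $\mathcal D$ has finite support $0\le v_1<\dots<v_m\le 1$ with $\Pr[v_i]=q_i>0$; each round the value $v(t)$ is drawn independently from $\mathcal D$ and is known only to the buyer. A seller strategy offers arms $0,1,\dots,K$ with bid labels $0=b_0<b_1<\dots<b_K\le 1$; at round $t$, arm $i$ has allocation probability $a_{i,t}\in[0,1]$ and price $p_{i,t}\in[0,a_{i,t}b_i]$; arm $0$ has $a_{0,t}=p_{0,t}=0$; for $i>j$ and all $t$, $a_{i,t}\ge a_{j,t}$ and $p_{i,t}\ge p_{j,t}$. Pulling arm $i$ at round $t$ gives the item with probability $a_{i,t}$ at price $p_{i,t}$; the buyer's utility with value $v$ is $v a_{i,t}-p_{i,t}$. An adaptive seller may choose $a_{i,t},p_{i,t}$ at round $t$ after seeing the history and even the buyer's distribution over arms in round $t$. Revenue is the expected total payment. ${\sf Mye}(\mathcal D)=\max_p p\Pr_{v\sim\mathcal D}[v\ge p]$. An algorithm is $\delta$-no-regret if its expected regret $\mathbb E[\max_i\sum_t r_{i,t}-\sum_t r_{I_t,t}]$ is at most $\delta$ against any reward sequence. Algorithm 1: run $m$ copies $M_1,\dots,M_m$ of $M$;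 $M_i$ learns over $K+i-1$ arms: $K$ ``bid arms'' corresponding to the seller's options $1,\dots,K$ (equivalently $0,\dots,K$) and $i-1$ ``value arms'' corresponding to $v_1,\dots,v_{i-1}$. In a round where the buyer's value is $v_i$, use $M_i$ to pick an arm; if it is a bid arm, play that option; if it is the value arm $v_j$, sample an arm from $M_j$ (without updating $M_j$), playing it if it is a bid arm and recursing if it is a value arm. Then update $M_i$ (only) with the realized utility of this round. *)

From HB Require Import structures.
From mathcomp Require Import all_boot all_order all_algebra.
Set Implicit Arguments. Unset Strict Implicit. Unset Printing Implicit Defensive.
Import Order.TTheory GRing.Theory Num.Theory.
Local Open Scope ring_scope.

Section Bandit.
Variable R : realFieldType.

Definition is_dist (n : nat) (d : 'I_n -> R) :=
  (forall i, 0 <= d i) /\ \sum_(i < n) d i = 1.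

(* A (randomized) bandit algorithm over n arms: given the observed history
   (arms pulled and rewards received), the distribution of the next arm. *)
Definition bandit_alg (n : nat) := seq ('I_n * R) -> 'I_n -> R.
Definition is_alg n (A : bandit_alg n) := forall h, is_dist (A h).

Definition maxr (s : seq R) := foldr Num.max (head 0 s) s.

Section Regret.
Variables (n : nat) (A : bandit_alg n) (S : Type).
(* adaptive (randomized) adversary: state s; rewards of all arms at state s
   are rew s; after the algorithm pulls arm i the next state is drawn from
   the finite distribution nxt s i (list of (probability, state)). *)
Variables (rew : S -> 'I_n -> R) (nxt : S -> 'I_n -> seq (R * S)).

(* expected value of  max_i (C_i + future rewards of i) - (G + future
   collected reward), over k remaining rounds. *)
Fixpoint exp_regret (k : nat) (s : S) (h : seq ('I_n * R)) (C : 'I_n -> R)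
    (G : R) : R :=
  match k with
  | 0 => maxr [seq C i | i <- enum 'I_n] - G
  | k'.+1 => \sum_(i < n) A h i *
       \sum_(ps <- nxt s i) ps.1 *
          exp_regret k' ps.2 (rcons h (i, rew s i))
             (fun j => C j + rew s j) (G + rew s i)
  end.
End Regret.

Definition no_regret (n T : nat) (A : bandit_alg n) (delta : R) : Prop :=
  forall (S : Type) (rew : S -> 'I_n -> R) (nxt : S -> 'I_n -> seq (R * S))
         (s0 : S),
    (forall s i, -1 <= rew s i <= 1) ->
    (forall s i, all (fun ps => 0 <= ps.1) (nxt s i) /\
                 \sum_(ps <- nxt s i) ps.1 = 1) ->
    exp_regret A rew nxt T s0 [::] (fun _ => 0) 0 <= delta.

(* One round of the auction: value index, menu (allocations, prices),
   arm chosen by the copy M_{value} (as a nat index), final bid arm played. *)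
Record rnd (m K : nat) := Rnd {
  r_val : 'I_m;
  r_alloc : 'I_K.+1 -> R;
  r_price : 'I_K.+1 -> R;
  r_arm : nat;
  r_bid : 'I_K.+1 }.

Definition valid_menu (K : nat) (b : 'I_K.+1 -> R)
    (mn : ('I_K.+1 -> R) * ('I_K.+1 -> R)) : Prop :=
  let a := mn.1 in let p := mn.2 in
  a ord0 = 0 /\ p ord0 = 0 /\
  (forall i, 0 <= a i <= 1) /\
  (forall i, 0 <= p i <= a i * b i) /\
  (forall i j : 'I_K.+1, (i < j)%N -> a j >= a i /\ p j >= p i).

Definition prob_ge (m : nat) (v q : 'I_m -> R) (p : R) : R :=
  \sum_(i < m | p <= v i) q i.

Definition is_Mye (m : nat) (v q : 'I_m -> R) (r : R) : Prop :=
  (exists p, r = p * prob_ge v q p) /\ (forall p, p * prob_ge v q p <= r).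

Definition is_min (m : nat) (q : 'I_m -> R) (r : R) : Prop :=
  (exists i, r = q i) /\ (forall i, r <= q i).

Section Auction.
Variables (m K : nat) (v q : 'I_m -> R) (M : forall n, bandit_alg n).
Variable sigma : seq (rnd m K) -> ('I_K.+1 -> R) * ('I_K.+1 -> R).

Definition util (r : rnd m K) : R :=
  v (r_val r) * r_alloc r (r_bid r) - r_price r (r_bid r).

(* History seen by copy M_i (0-based i): arms 0..K are the bid arms,
   arm K+1+j (j < i) is the value arm for v_j. *)
Definition copy_hist (i : nat) (h : seq (rnd m K)) : seq ('I_(K + i).+1 * R) :=
  [seq (inord (r_arm r), util r) | r <- h & (r_val r == i :> nat)].

Definition pi (h : seq (rnd m K)) (i x : nat) : R :=
  if (x < (K + i).+1)%N then M (copy_hist i h) (inord x) else 0.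

(* distributions over final bid arms when sampling from M_0, ..., M_{k-1}
   (recursing through value arms, without updating) *)
Fixpoint dists (h : seq (rnd m K)) (k : nat) : seq ('I_K.+1 -> R) :=
  match k with
  | 0 => [::]
  | k'.+1 => let ds := dists h k' in
      rcons ds (fun bb : 'I_K.+1 => pi h k' bb +
         \sum_(j < k') pi h k' (K.+1 + j)%N * nth (fun _ => 0) ds j bb)
  end.

(* probability that the final bid arm is bb given the copy chose arm x *)
Definition cond (h : seq (rnd m K)) (x : nat) (bb : 'I_K.+1) : R :=
  if (x < K.+1)%N then (x == bb :> nat)%:R
  else nth (fun _ => 0) (dists h m) (x - K.+1)%N bb.

Fixpoint exp_rev (k : nat) (h : seq (rnd m K)) : R :=
  match k with
  | 0 => 0
  | k'.+1 =>
      let a := (sigma h).1 in let p := (sigma h).2 in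
      \sum_(i < m) q i * \sum_(x < (K + i).+1) pi h i x *
        \sum_(bb < K.+1) cond h x bb *
          (p bb + exp_rev k' (rcons h (Rnd i a p x bb)))
  end.
End Auction.

End Bandit.

(* Fix a value v_i.  The copy M_i faces an adaptive reward sequence, and its
   regret is measured against two kinds of fixed arms: the bid arm 0, worth
   utility 0, and the value arm v_j, which plays the bid that a buyer of value
   v_j ends up playing.  With X_j and P_j the expected total allocation and
   payment of a buyer of value v_j, dividing the regret bound delta of M_i by
   the probability q_i >= q_min of the value v_i yields approximate individual
   rationality P_i - v_i X_i <= eps and approximate downward incentive
   compatibility v_i X_j - P_j <= v_i X_i - P_i + eps (j < i), where
   eps = delta / q_min.  Raising the utility of type i by (i + 1) eps makes
   these constraints exact, at a cost of at most m eps in revenue, and an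
   allocation rule with X_i <= T that is individually rational and downward
   incentive compatible earns at most T Mye(D). *)

From Pilot Require Import Defs.
From HB Require Import structures.
From mathcomp Require Import all_boot all_order all_algebra.
From mathcomp Require Import ring lra zify.
Import Order.TTheory GRing.Theory Num.Theory.
Local Open Scope ring_scope.

Section IncentiveConstraints.
Context {R : realFieldType}.

Lemma downward_ic_revenue_le (m : nat) (v q X W : nat -> R) (t mye : R) :
  0 <= t -> 0 <= mye ->
  (forall i, (i < m)%N -> 0 <= v i) -> (forall i, (i < m)%N -> 0 <= q i) ->
  (forall i, (i < m)%N -> X i <= t) -> (forall i, (i < m)%N -> 0 <= W i) ->
  (forall j i, (j < i)%N -> (i < m)%N -> W j + (v i - v j) * X j <= W i) ->
  (forall k, (k < m)%N -> v k * \sum_(i < m | (k <= i)%N) q i <= mye) ->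
  \sum_(i < m) q i * (v i * X i - W i) <= t * mye.
Proof.
(* Peel off the lowest type.  If its allocation X 0 is negative it pays at
   most 0 and is dropped.  Otherwise subtract X 0 from every allocation: the
   shifted utilities stay downward IC, and the revenue X 0 * v 0 extracted
   from all types is paid for by the Myerson bound at price v 0. *)
elim: m v q X W t => [|m IH] v q X W t t0 mye0 v0 q0 Xt W0 IC My.
  by rewrite big_ord0 mulr_ge0.
rewrite big_ord_recl /=.
set Q := \sum_(i < m) q i.+1.
have My' k : (k < m)%N -> v k.+1 * \sum_(i < m | (k <= i)%N) q i.+1 <= mye.
  move=> km; have := My k.+1 km.
  by rewrite big_mkcond big_ord_recl /= add0r -big_mkcond.
have My0 : v 0%N * (q 0%N + Q) <= mye.
  by have := My 0%N isT; rewrite big_mkcond big_ord_recl.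
have v00 := v0 0%N isT; have q00 := q0 0%N isT.
have W00 := W0 0%N isT; have X0t := Xt 0%N isT.
case: (ltrP (X 0%N) 0) => [X0lt0|X0ge0].
  have vX0 : v 0%N * X 0%N <= 0 by rewrite mulr_ge0_le0 // ltW.
  have : q 0%N * (v 0%N * X 0%N - W 0%N) <= 0 by rewrite mulr_ge0_le0 //; lra.
  have := IH (fun i => v i.+1) (fun i => q i.+1) (fun i => X i.+1) (fun i => W i.+1) t
    t0 mye0 (fun i => v0 i.+1) (fun i => q0 i.+1) (fun i => Xt i.+1)
    (fun i => W0 i.+1) (fun j i => IC j.+1 i.+1) My'.
  lra.
have shifted : \sum_(i < m) q i.+1 * (v i.+1 * (X i.+1 - X 0%N)
      - (W i.+1 - (v i.+1 - v 0%N) * X 0%N)) <= (t - X 0%N) * mye.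
  apply: (IH (fun i => v i.+1) (fun i => q i.+1) (fun i => X i.+1 - X 0%N)
    (fun i => W i.+1 - (v i.+1 - v 0%N) * X 0%N)) => //; first lra.
  - by move=> i; exact: v0 i.+1.
  - by move=> i; exact: q0 i.+1.
  - by move=> i im; have := Xt i.+1 im; lra.
  - by move=> i im; have := IC 0%N i.+1 isT im; lra.
  - by move=> j i ji im; have := IC j.+1 i.+1 ji im; lra.
have -> : \sum_(i < m) q i.+1 * (v i.+1 * X i.+1 - W i.+1) =
    \sum_(i < m) q i.+1 * (v i.+1 * (X i.+1 - X 0%N)
      - (W i.+1 - (v i.+1 - v 0%N) * X 0%N)) + Q * (v 0%N * X 0%N).
  by rewrite mulr_suml -big_split /=; apply: eq_bigr => i _; ring.
have : X 0%N * (v 0%N * (q 0%N + Q)) <= X 0%N * mye by apply: ler_wpM2l.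
have : q 0%N * (v 0%N * X 0%N - W 0%N) <= q 0%N * (v 0%N * X 0%N).
  by apply: ler_wpM2l => //; lra.
have -> : X 0%N * (v 0%N * (q 0%N + Q)) =
   q 0%N * (v 0%N * X 0%N) + Q * (v 0%N * X 0%N) by ring.
have -> : t * mye = X 0%N * mye + (t - X 0%N) * mye by ring.
lra.
Qed.

Lemma approx_ic_revenue_le {m : nat} (v q X P : 'I_m -> R) (t mye eps : R) :
  0 <= t -> 0 <= mye -> 0 <= eps ->
  (forall i, 0 <= v i) -> (forall i, 0 <= q i) -> \sum_i q i = 1 ->
  (forall i, X i <= t) -> (forall i, P i - v i * X i <= eps) ->
  (forall i j : 'I_m, (j < i)%N -> v i * X j - P j - (v i * X i - P i) <= eps) ->
  (forall k : 'I_m, v k * \sum_(i < m | (k <= i)%N) q i <= mye) ->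
  \sum_i q i * P i <= t * mye + m%:R * eps.
Proof.
move=> t0 mye0 eps0 v0 q0 q1 Xt IR IC My.
pose ext (f : 'I_m -> R) (j : nat) := if insub j is Some i then f i else 0.
have extE f (i : 'I_m) : ext f i = f i by rewrite /ext valK.
have ordP j : (j < m)%N -> exists i : 'I_m, j = i by move=> jm; exists (Ordinal jm).
pose W j := ext v j * ext X j - ext P j + j.+1%:R * eps.
have slack_le : \sum_(i < m) q i * i.+1%:R <= m%:R.
  have -> : m%:R = \sum_(i < m) q i * m%:R :> R by rewrite -mulr_suml q1 mul1r.
  by apply: ler_sum => i _; rewrite ler_wpM2l // ler_nat.
suff revenue_le : \sum_(i < m) ext q i * (ext v i * ext X i - W i) <= t * mye.
  have -> : \sum_i q i * P i = \sum_(i < m) ext q i * (ext v i * ext X i - W i)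
      + eps * \sum_(i < m) q i * i.+1%:R.
    by rewrite mulr_sumr -big_split /=; apply: eq_bigr => i _; rewrite /W !extE; ring.
  by rewrite lerD // [m%:R * eps]mulrC ler_wpM2l.
apply: (downward_ic_revenue_le m (ext v) (ext q) (ext X) W) => //.
- by move=> j /ordP [i ->]; rewrite extE.
- by move=> j /ordP [i ->]; rewrite extE.
- by move=> j /ordP [i ->]; rewrite extE.
- move=> j /ordP [i ->]; rewrite /W !extE; have := IR i.
  have : 0 <= (i : nat)%:R * eps by rewrite mulr_ge0.
  by rewrite -nat1r mulrDl mul1r; lra.
- move=> j i ji im; have [i' Ei] := ordP i im.
  have [j' Ej] := ordP j (ltn_trans ji im); subst i j.
  rewrite /W !extE; have := IC i' j' ji.
  have : (j' : nat).+1%:R * eps <= (i' : nat)%:R * eps by rewrite ler_wpM2r // ler_nat.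
  by rewrite -nat1r mulrDl mul1r mulrBl; lra.
- move=> k /ordP [i ->]; rewrite extE.
  by under eq_bigr do rewrite extE.
Qed.

Lemma prob_ge_value {m : nat} (v q : 'I_m -> R) (k : 'I_m) :
  (forall i j : 'I_m, (i < j)%N -> v i < v j) ->
  prob_ge v q (v k) = \sum_(i < m | (k <= i)%N) q i.
Proof.
move=> v_incr; apply: eq_bigl => i.
case: (ltngtP k i) => [ki|ik|/val_inj ->]; last by rewrite !lexx.
- by rewrite (ltW (v_incr _ _ ki)).
- by rewrite leNgt (v_incr _ _ ik).
Qed.

Lemma ler_pdivr_min {a d w wmin : R} :
  0 < wmin -> wmin <= w -> 0 <= d -> w * a <= d -> a <= d / wmin.
Proof.
move=> wmin0 wmin_le d0 wa; rewrite ler_pdivlMr //.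
case: (lerP a 0) => a0.
  have : a * wmin <= 0 by rewrite mulr_le0_ge0 // ltW.
  lra.
have : a * wmin <= a * w by rewrite ler_wpM2l // ltW.
rewrite [a * w]mulrC; lra.
Qed.

End IncentiveConstraints.

Section FiniteDistributions.
Context {R : realFieldType}.

(* A finitely supported distribution on [A] is a list of (weight, outcome)
   pairs; outcomes may repeat. *)
Definition expect {A : Type} (l : seq (R * A)) (F : A -> R) : R :=
  \sum_(ps <- l) ps.1 * F ps.2.

Definition is_fdist {A : Type} (l : seq (R * A)) : Prop :=
  all (fun ps => 0 <= ps.1) l /\ \sum_(ps <- l) ps.1 = 1.

Definition dirac {A : Type} (x : A) : seq (R * A) := [:: (1, x)].

Definition mix {I : finType} {A : Type} (w : I -> R) (f : I -> seq (R * A)) :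
    seq (R * A) :=
  flatten [seq [seq (w i * ps.1, ps.2) | ps <- f i] | i <- enum I].

Context {A : Type}.
Implicit Types (l : seq (R * A)) (F G : A -> R).

Lemma expect_dirac (x : A) F : expect (dirac x) F = F x.
Proof. by rewrite /expect big_seq1 mul1r. Qed.

Lemma expect_mix (I : finType) (w : I -> R) (f : I -> seq (R * A)) F :
  expect (mix w f) F = \sum_i w i * expect (f i) F.
Proof.
rewrite /expect big_flatten /= big_map big_enum /=; apply: eq_bigr => i _.
by rewrite big_map mulr_sumr; apply: eq_bigr => ps _; rewrite mulrA.
Qed.

Lemma eq_expect l F G : F =1 G -> expect l F = expect l G.
Proof. by move=> FG; apply: eq_bigr => ps _; rewrite FG. Qed.

Lemma expectD l F G : expect l (fun a => F a + G a) = expect l F + expect l G.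
Proof. by rewrite /expect -big_split; apply: eq_bigr => ps _; rewrite mulrDr. Qed.

Lemma expect_cst l c : is_fdist l -> expect l (fun _ => c) = c.
Proof.
by move=> [_ l1]; rewrite /expect -mulr_suml l1 mul1r.
Qed.

Lemma ler_expect l F G : is_fdist l -> (forall a, F a <= G a) ->
  expect l F <= expect l G.
Proof.
move=> [l0 _] FG; rewrite /expect.
elim: l l0 => [|ps l IH] /=; first by rewrite !big_nil.
by move=> /andP [ps0 l0]; rewrite !big_cons lerD ?ler_wpM2l ?IH.
Qed.

Lemma fdist_dirac (x : A) : is_fdist (dirac x).
Proof. by rewrite /is_fdist /= ler01 big_seq1. Qed.

Lemma fdist_mix (I : finType) (w : I -> R) (f : I -> seq (R * A)) :
  (forall i, 0 <= w i) -> \sum_i w i = 1 -> (forall i, is_fdist (f i)) ->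
  is_fdist (mix w f).
Proof.
move=> w0 w1 f1; split.
  rewrite /mix; elim: (enum I) => //= i s IH; rewrite all_cat IH andbT all_map.
  have [fi0 _] := f1 i; elim: (f i) fi0 => //= ps l IHl /andP [ps0 /IHl ->].
  by rewrite andbT mulr_ge0.
have -> : \sum_(ps <- mix w f) ps.1 = expect (mix w f) (fun _ => 1).
  by apply: eq_bigr => ps _; rewrite mulr1.
rewrite expect_mix -[X in _ = X]w1; apply: eq_bigr => i _.
by rewrite (expect_cst _ _ (f1 i)) mulr1.
Qed.

End FiniteDistributions.

Lemma maxr_ub (R : realFieldType) (s : seq R) x : x \in s -> x <= maxr s.
Proof.
rewrite /maxr; elim: s (head 0 s) => // z s IH a; rewrite in_cons /=.
case/orP => [/eqP ->|xs]; rewrite le_max; first by rewrite lexx.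
by rewrite IH ?orbT.
Qed.

Section RegretToArm.
Context {R : realFieldType} {n : nat} {S : Type}.
Variable A : bandit_alg R n.
Variables (rew : S -> 'I_n -> R) (nxt : S -> 'I_n -> seq (R * S)) (y : 'I_n).
Hypothesis A_alg : is_alg A.
Hypothesis nxt_fdist : forall s x, is_fdist (nxt s x).

Fixpoint regret_to (k : nat) (s : S) (h : seq ('I_n * R)) : R :=
  match k with
  | 0 => 0
  | k'.+1 => \sum_(x < n) A h x * expect (nxt s x)
       (fun s' => rew s y - rew s x + regret_to k' s' (rcons h (x, rew s x)))
  end.

Lemma regret_to_le_exp_regret k s h C G :
  C y - G + regret_to k s h <= exp_regret A rew nxt k s h C G.
Proof.
elim: k s h C G => [|k IH] s h C G /=.
  by rewrite addr0 lerB // maxr_ub // map_f // mem_enum.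
have [A0 A1] := A_alg h.
rewrite -[C y - G]mulr1 -A1 mulr_sumr -big_split /=; apply: ler_sum => x _.
rewrite -(expect_cst _ (C y - G) (nxt_fdist s x)) mulrC -mulrDr -expectD.
apply: ler_wpM2l => //.
apply: (ler_expect _ _ (fun s' => exp_regret A rew nxt k s' _ _ _)) => // s'.
apply: le_trans (IH _ _ _ _); lra.
Qed.

End RegretToArm.

Lemma no_regret_ge0 {R : realFieldType} {n T : nat} {A : bandit_alg R n}
    (y : 'I_n) {delta : R} :
  is_alg A -> no_regret T A delta -> 0 <= delta.
Proof.
(* Against identically zero rewards every arm has zero regret. *)
move=> A_alg NR.
pose rew (_ : unit) (_ : 'I_n) : R := 0.
pose nxt (s : unit) (_ : 'I_n) : seq (R * unit) := dirac s.
have nxt_fdist s x : is_fdist (nxt s x) by exact: fdist_dirac.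
have rew_regret k s h : regret_to A rew nxt y k s h = 0.
  elim: k s h => // k IH s h /=; apply: big1 => x _.
  by rewrite expect_dirac IH /rew subrr add0r mulr0.
have rew_bd : forall s x, -1 <= rew s x <= 1 by move=> *; rewrite /rew lerN10 ler01.
apply: le_trans (NR unit rew nxt tt rew_bd nxt_fdist).
have := regret_to_le_exp_regret _ rew _ y A_alg nxt_fdist T tt [::] (fun _ => 0) 0.
by rewrite rew_regret subrr addr0.
Qed.

Section Buyer.
Context {R : realFieldType} {m K : nat}.
Variables (v q : 'I_m -> R).
Variable M : forall n, bandit_alg R n.
Variable sigma : seq (rnd R m K) -> ('I_K.+1 -> R) * ('I_K.+1 -> R).
Hypothesis M_alg : forall i, (i < m)%N -> is_alg (M (K + i).+1).
Hypothesis q_ge0 : forall i, 0 <= q i.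
Hypothesis q_sum1 : \sum_(i < m) q i = 1.
Context {b : 'I_K.+1 -> R}.
Hypothesis v01 : forall i, 0 <= v i <= 1.
Hypothesis b_le1 : forall bb, b bb <= 1.
Hypothesis menu_valid : forall h, valid_menu b (sigma h).
Variables (T : nat) (delta : R).
Hypothesis M_no_regret : forall i : 'I_m, no_regret T (M (K + i).+1) delta.

Implicit Types (h : seq (rnd R m K)) (bb : 'I_K.+1).
Local Notation pi := (Defs.pi v M).
Local Notation cond := (Defs.cond v M).
Local Notation d0 := (fun _ : 'I_K.+1 => 0 : R).

Definition bid_dist h (j : nat) : 'I_K.+1 -> R := nth d0 (dists v M h m) j.

Lemma size_dists h k : size (dists v M h k) = k.
Proof. by elim: k => //= k IH; rewrite size_rcons IH. Qed.

Lemma nth_dists h k j : (j < k)%N ->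
  nth d0 (dists v M h k) j = nth d0 (dists v M h j.+1) j.
Proof.
elim: k => // k IH jk; have [jk'|kj] := ltnP j k.
  by rewrite /= nth_rcons size_dists jk' IH.
by have -> : j = k by apply/eqP; rewrite eqn_leq kj -ltnS jk.
Qed.

Lemma bid_dist_rec h j bb : (j < m)%N ->
  bid_dist h j bb = pi h j bb + \sum_(j' < j) pi h j (K.+1 + j') * bid_dist h j' bb.
Proof.
move=> jm; rewrite {1}/bid_dist (nth_dists h _ _ jm) /= nth_rcons size_dists ltnn eqxx.
congr (_ + _); apply: eq_bigr => j' _; have j'j := ltn_ord j'.
by rewrite /bid_dist (nth_dists h _ _ j'j) (nth_dists h _ _ (ltn_trans j'j jm)).
Qed.

Lemma pi_ge0 h i x : (i < m)%N -> 0 <= pi h i x.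
Proof.
by move=> im; rewrite /Defs.pi; case: ifP => _ //; apply: (M_alg _ im _).1.
Qed.

Lemma pi_sum1 h i : (i < m)%N -> \sum_(x < (K + i).+1) pi h i x = 1.
Proof.
move=> im; rewrite -(M_alg _ im (copy_hist v i h)).2; apply: eq_bigr => x _.
by rewrite /Defs.pi ltn_ord inord_val.
Qed.

Lemma bid_dist_prob h j : (j < m)%N ->
  (forall bb, 0 <= bid_dist h j bb) /\ \sum_bb bid_dist h j bb = 1.
Proof.
elim/ltn_ind: j => j IH jm.
have IHj (j' : 'I_j) := IH j' (ltn_ord j') (ltn_trans (ltn_ord j') jm).
split=> [bb|].
  rewrite bid_dist_rec // addr_ge0 ?pi_ge0 // sumr_ge0 // => j' _.
  by rewrite mulr_ge0 ?pi_ge0 ?(IHj j').1.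
under eq_bigr do rewrite bid_dist_rec //.
rewrite big_split /= exchange_big /=.
under [X in _ + X = _]eq_bigr do rewrite -mulr_sumr (IHj _).2 mulr1.
by rewrite -(pi_sum1 h _ jm) -[(K + j).+1]/(K.+1 + j)%N big_split_ord.
Qed.

Lemma arm_lt (i : 'I_m) (x : 'I_(K + i).+1) : (x < K.+1 + m)%N.
Proof. by have := ltn_ord x; have := ltn_ord i; lia. Qed.

Lemma cond_bid h (x : 'I_K.+1) bb : cond h x bb = (x == bb)%:R.
Proof. by rewrite /Defs.cond ltn_ord. Qed.

Lemma cond_value h j bb : cond h (K.+1 + j) bb = bid_dist h j bb.
Proof. by rewrite /Defs.cond ltnNge leq_addr /= addKn. Qed.

Lemma cond_prob h x : (x < K.+1 + m)%N ->
  (forall bb, 0 <= cond h x bb) /\ \sum_bb cond h x bb = 1.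
Proof.
move=> xm; case: (ltnP x K.+1) => [xK|Kx].
  rewrite -[x]/(nat_of_ord (Ordinal xK)).
  split=> [bb|]; first by rewrite cond_bid ler0n.
  under eq_bigr do rewrite cond_bid.
  rewrite (bigD1 (Ordinal xK)) //= eqxx big1 ?addr0 // => bb.
  by rewrite eq_sym => /negPf ->.
have jm : (x - K.+1 < m)%N by rewrite ltn_subLR.
rewrite -(subnKC Kx); split=> [bb|]; first by rewrite cond_value (bid_dist_prob h _ jm).1.
under eq_bigr do rewrite cond_value.
exact: (bid_dist_prob h _ jm).2.
Qed.

Lemma sum_pi_cond h i bb : (i < m)%N ->
  \sum_(x < (K + i).+1) pi h i x * cond h x bb = bid_dist h i bb.
Proof.
move=> im; rewrite bid_dist_rec // -[(K + i).+1]/(K.+1 + i)%N big_split_ord /=.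
congr (_ + _); last by apply: eq_bigr => j _; rewrite cond_value.
rewrite (bigD1 bb) //= cond_bid eqxx mulr1 big1 ?addr0 // => x.
by rewrite cond_bid => /negPf ->; rewrite mulr0.
Qed.

Definition round_avg h (Y : 'I_m -> nat -> 'I_K.+1 -> R) : R :=
  \sum_(i < m) q i * \sum_(x < (K + i).+1) pi h i x * \sum_bb cond h x bb * Y i x bb.

Lemma eq_round_avg h Y1 Y2 : (forall i x bb, Y1 i x bb = Y2 i x bb) ->
  round_avg h Y1 = round_avg h Y2.
Proof.
move=> E; apply: eq_bigr => i _; congr (_ * _); apply: eq_bigr => x _.
by congr (_ * _); apply: eq_bigr => bb _; rewrite E.
Qed.

Lemma round_avgD h Y1 Y2 :
  round_avg h (fun i x bb => Y1 i x bb + Y2 i x bb) = round_avg h Y1 + round_avg h Y2.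
Proof.
rewrite /round_avg -big_split; apply: eq_bigr => i _ /=; rewrite -mulrDr -big_split.
congr (_ * _); apply: eq_bigr => x _ /=; rewrite -mulrDr -big_split.
by congr (_ * _); apply: eq_bigr => bb _ /=; rewrite mulrDr.
Qed.

Lemma round_avgZ h c Y : round_avg h (fun i x bb => c * Y i x bb) = c * round_avg h Y.
Proof.
rewrite /round_avg mulr_sumr; apply: eq_bigr => i _; rewrite mulrCA; congr (_ * _).
rewrite mulr_sumr; apply: eq_bigr => x _; rewrite mulrCA; congr (_ * _).
by rewrite mulr_sumr; apply: eq_bigr => bb _; rewrite mulrCA.
Qed.

Lemma ler_round_avg h Y1 Y2 : (forall i x bb, Y1 i x bb <= Y2 i x bb) ->
  round_avg h Y1 <= round_avg h Y2.
Proof.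
move=> Y12; apply: ler_sum => i _; apply: ler_wpM2l => //.
apply: ler_sum => x _; apply: ler_wpM2l; first exact: pi_ge0.
apply: ler_sum => bb _; apply: ler_wpM2l => //.
exact: (cond_prob h _ (arm_lt _ x)).1.
Qed.

Lemma round_avg_cst h c : round_avg h (fun _ _ _ => c) = c.
Proof.
rewrite /round_avg -[RHS]mul1r -q_sum1 mulr_suml; apply: eq_bigr => i _.
rewrite -[c in RHS]mul1r -(pi_sum1 h _ (ltn_ord i)) !mulr_suml; congr (_ * _).
apply: eq_bigr => x _; rewrite -mulr_suml (cond_prob h _ (arm_lt _ x)).2.
by rewrite mul1r.
Qed.

Lemma sum_pi_cond_bid h (i : 'I_m) (Z : 'I_K.+1 -> R) :
  \sum_(x < (K + i).+1) pi h i x * \sum_bb cond h x bb * Z bb =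
  \sum_bb bid_dist h i bb * Z bb.
Proof.
under eq_bigr do rewrite mulr_sumr.
rewrite exchange_big /=; apply: eq_bigr => bb _.
rewrite -(sum_pi_cond h _ bb (ltn_ord i)) mulr_suml.
by apply: eq_bigr => x _; rewrite mulrA.
Qed.

Definition extend h (i : 'I_m) (x : nat) bb :=
  rcons h (Rnd i (sigma h).1 (sigma h).2 x bb).

Fixpoint cumul (F : seq (rnd R m K) -> R) (k : nat) h : R :=
  match k with
  | 0 => 0
  | k'.+1 => F h + round_avg h (fun i x bb => cumul F k' (extend h i x bb))
  end.

Lemma eq_cumul F G k h : (forall h, F h = G h) -> cumul F k h = cumul G k h.
Proof.
move=> FG; elim: k h => // k IH h /=; rewrite FG.
by congr (_ + _); apply: eq_round_avg => i x bb; rewrite IH.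
Qed.

Lemma cumulD F G k h : cumul (fun h => F h + G h) k h = cumul F k h + cumul G k h.
Proof.
elim: k h => [|k IH] h /=; first by rewrite addr0.
rewrite (eq_round_avg h _ _ (fun i x bb => IH _)) round_avgD; lra.
Qed.

Lemma cumulZ c F k h : cumul (fun h => c * F h) k h = c * cumul F k h.
Proof.
elim: k h => [|k IH] h /=; first by rewrite mulr0.
by rewrite (eq_round_avg h _ _ (fun i x bb => IH _)) round_avgZ mulrDr.
Qed.

Lemma cumul_sum (I : Type) (r : seq I) (c : I -> R) (F : I -> seq (rnd R m K) -> R)
    k h :
  cumul (fun h => \sum_(j <- r) c j * F j h) k h = \sum_(j <- r) c j * cumul (F j) k h.
Proof.
elim: r => [|j r IH].
  rewrite big_nil (eq_cumul _ (fun h => 0 * 0)) => [|h']; last by rewrite big_nil mul0r.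
  by rewrite cumulZ mul0r.
rewrite big_cons -cumulZ -IH -cumulD.
by apply: eq_cumul => h'; rewrite big_cons.
Qed.

Lemma cumul_le F c k h : (forall h, F h <= c) -> cumul F k h <= k%:R * c.
Proof.
move=> Fc; elim: k h => [|k IH] h /=; first by rewrite mul0r.
rewrite -nat1r mulrDl mul1r lerD //.
by rewrite -(round_avg_cst h (k%:R * c)); apply: ler_round_avg.
Qed.

Lemma cumul_round_avg g k h :
  cumul (fun h => round_avg h (g h)) k.+1 h =
  round_avg h (fun i x bb =>
    g h i x bb + cumul (fun h => round_avg h (g h)) k (extend h i x bb)).
Proof. by rewrite round_avgD. Qed.

Lemma exp_rev_cumul k h :
  exp_rev v q M sigma k h =
  cumul (fun h => round_avg h (fun _ _ bb => (sigma h).2 bb)) k h.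
Proof.
elim: k h => // k IH h; rewrite cumul_round_avg /= /round_avg.
apply: eq_bigr => i _; congr (_ * _); apply: eq_bigr => x _; congr (_ * _).
by apply: eq_bigr => bb _; rewrite IH.
Qed.

Definition exp_alloc h j := \sum_bb bid_dist h j bb * (sigma h).1 bb.
Definition exp_price h j := \sum_bb bid_dist h j bb * (sigma h).2 bb.
Definition total_alloc j := cumul (fun h => exp_alloc h j) T [::].
Definition total_price j := cumul (fun h => exp_price h j) T [::].

Lemma exp_rev_total_price :
  exp_rev v q M sigma T [::] = \sum_(i < m) q i * total_price i.
Proof.
rewrite exp_rev_cumul -cumul_sum; apply: eq_cumul => h.
by apply: eq_bigr => i _; rewrite sum_pi_cond_bid.
Qed.

Lemma total_alloc_le j : (j < m)%N -> total_alloc j <= T%:R.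
Proof.
move=> jm; rewrite -[X in _ <= X]mulr1; apply: cumul_le => h.
have [_ [_ [alloc01 _]]] := menu_valid h.
rewrite -(bid_dist_prob h _ jm).2; apply: ler_sum => bb _.
rewrite -[X in _ <= X]mulr1 ler_wpM2l ?(bid_dist_prob h _ jm).1 //.
by have /andP [] := alloc01 bb.
Qed.

Section CopyAdversary.
Variables (i0 : 'I_m) (y : 'I_(K + i0).+1).
Local Notation n := (K + i0).+1.

(* A state holds the auction
   history, the number of rounds left, and a presampled final bid for every
   arm of M_{i0}, so that the rewards of all arms are defined at once.  After
   M_{i0} pulls an arm, the rounds in which the buyer has another value are
   simulated until the value is v_{i0} again. *)
Definition adv_state := (seq (rnd R m K) * nat * {ffun 'I_n -> 'I_K.+1})%type.

Definition value_util h bb : R := v i0 * (sigma h).1 bb - (sigma h).2 bb.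

Definition adv_reward (s : adv_state) (x : 'I_n) : R :=
  if s.1.2 is 0 then 0 else value_util s.1.1 (s.2 x).

Definition fate_weight h (f : {ffun 'I_n -> 'I_K.+1}) : R :=
  \prod_(z : 'I_n) cond h z (f z).

Definition presample h r : seq (R * adv_state) :=
  mix (fate_weight h) (fun f => dirac (h, r, f)).

Fixpoint advance h r : seq (R * adv_state) :=
  match r with
  | 0 => presample h 0
  | r'.+1 => mix q (fun i => if i == i0 then presample h r else
       mix (fun x : 'I_(K + i).+1 => pi h i x) (fun x =>
         mix (cond h x) (fun bb => advance (extend h i x bb) r')))
  end.

Definition adv_next (s : adv_state) (x : 'I_n) : seq (R * adv_state) :=
  if s.1.2 is r'.+1 then advance (extend s.1.1 i0 x (s.2 x)) r' else dirac s.

Definition regret_step h (i : 'I_m) (x : nat) bb : R :=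
  if i == i0 then \sum_bb' cond h y bb' * value_util h bb' - value_util h bb else 0.

Lemma fate_weight_marginal h (z : 'I_n) (phi : 'I_K.+1 -> R) :
  \sum_f fate_weight h f * phi (f z) = \sum_bb cond h z bb * phi bb.
Proof.
pose c' (z' : 'I_n) bb := if z' == z then cond h z' bb * phi bb else cond h z' bb.
have E (f : {ffun 'I_n -> 'I_K.+1}) : fate_weight h f * phi (f z) = \prod_z' c' z' (f z').
  rewrite /fate_weight (bigD1 z) //= [in RHS](bigD1 z) //= /c' eqxx mulrAC.
  by congr (_ * _); apply: eq_bigr => z' /negPf ->.
under eq_bigr do rewrite E.
rewrite -(bigA_distr_bigA c') /= (bigD1 z) //= [X in _ * X]big1 ?mulr1.
  by apply: eq_bigr => bb _; rewrite /c' eqxx.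
by move=> z' /negPf ne; rewrite /c' ne (cond_prob h _ (arm_lt _ z')).2.
Qed.

Lemma presample_fdist h r : is_fdist (presample h r).
Proof.
apply: fdist_mix => [f||f]; last exact: fdist_dirac.
  by apply: prodr_ge0 => z _; exact: (cond_prob h _ (arm_lt _ z)).1.
have := fate_weight_marginal h ord0 (fun _ => 1).
under eq_bigr do rewrite mulr1.
by move=> ->; under eq_bigr do rewrite mulr1; exact: (cond_prob h _ (arm_lt _ ord0)).2.
Qed.

Lemma expect_presample h r F :
  expect (presample h r) F = \sum_f fate_weight h f * F (h, r, f).
Proof. by rewrite expect_mix; under eq_bigr do rewrite expect_dirac. Qed.

Lemma advance_fdist r h : is_fdist (advance h r).
Proof.
elim: r h => [|r IH] h; first exact: presample_fdist.
apply: fdist_mix => // i; case: eqP => _; first exact: presample_fdist.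
apply: fdist_mix => [x||x]; [exact: pi_ge0 | exact: pi_sum1 |].
have [cond0 cond1] := cond_prob h _ (arm_lt _ x).
by apply: fdist_mix => // bb; exact: IH.
Qed.

Lemma adv_next_fdist s x : is_fdist (adv_next s x).
Proof.
by rewrite /adv_next; case: s.1.2 => [|r]; [exact: fdist_dirac | exact: advance_fdist].
Qed.

Local Notation regret_adv := (regret_to (M n) adv_reward adv_next y).

Lemma regret_adv_done k (s : adv_state) hh : s.1.2 = 0%N -> regret_adv k s hh = 0.
Proof.
move=> s0; elim: k hh => // k IH hh /=; apply: big1 => x _.
by rewrite /adv_next /adv_reward s0 expect_dirac IH subrr add0r mulr0.
Qed.

Lemma copy_hist_extend_other h (i : 'I_m) x bb : i != i0 ->
  copy_hist v i0 (extend h i x bb) = copy_hist v i0 h.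
Proof.
move=> ne; rewrite /copy_hist filter_rcons /=.
by have -> : (i == i0 :> nat) = false by apply/negP => /eqP /val_inj /eqP; apply/negP.
Qed.

Lemma copy_hist_extend_self h (x : 'I_n) bb :
  copy_hist v i0 (extend h i0 x bb) = rcons (copy_hist v i0 h) (x, value_util h bb).
Proof. by rewrite /copy_hist filter_rcons /= eqxx map_rcons /= inord_val. Qed.

Lemma copy_alg_pi h (x : 'I_n) : M n (copy_hist v i0 h) x = pi h i0 x.
Proof. by rewrite /Defs.pi ltn_ord inord_val. Qed.

(* Averaging the presampled bids over their joint law leaves only the
   marginals of the pulled arm and of the comparison arm [y]. *)
Lemma presample_round h (U : 'I_K.+1 -> R) (Z : 'I_n -> 'I_K.+1 -> R) :
  \sum_f fate_weight h f *
    \sum_(x : 'I_n) pi h i0 x * (U (f y) - U (f x) + Z x (f x)) =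
  \sum_(x : 'I_n) pi h i0 x *
    \sum_bb cond h x bb * (\sum_bb' cond h y bb' * U bb' - U bb + Z x bb).
Proof.
under eq_bigr do rewrite mulr_sumr.
rewrite exchange_big /=; apply: eq_bigr => x _.
under eq_bigr do rewrite mulrCA.
rewrite -mulr_sumr; congr (_ * _).
have split_f f : fate_weight h f * (U (f y) - U (f x) + Z x (f x)) =
    fate_weight h f * U (f y) + fate_weight h f * (Z x (f x) - U (f x)) by ring.
rewrite (eq_bigr _ (fun f _ => split_f f)) big_split /= !fate_weight_marginal.
rewrite (fate_weight_marginal h x (fun bb => Z x bb - U bb)).
set c := \sum_bb' _ * U bb'.
rewrite -{1}[c]mulr1 -(cond_prob h _ (arm_lt _ x)).2 mulr_sumr -big_split.
by apply: eq_bigr => bb _ /=; ring.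
Qed.

Lemma expect_advance_regret r h k : (r <= k)%N ->
  expect (advance h r) (fun s => regret_adv k s (copy_hist v i0 h)) =
  cumul (fun h => round_avg h (regret_step h)) r h.
Proof.
elim: r h k => [|r IH] h k rk.
  by rewrite expect_presample big1 // => f _; rewrite regret_adv_done ?mulr0.
case: k rk => // k rk; rewrite cumul_round_avg expect_mix; apply: eq_bigr => i _.
congr (q i * _); case: eqP => [->|/eqP ne]; last first.
  rewrite expect_mix; apply: eq_bigr => x _; rewrite expect_mix; congr (_ * _).
  apply: eq_bigr => bb _; rewrite /regret_step (negPf ne) add0r.
  rewrite -(IH _ k.+1 (ltnW rk)); congr (_ * _); apply: eq_expect => s.
  by rewrite copy_hist_extend_other.
rewrite /regret_step eqxx expect_presample.
rewrite -(presample_round _ (value_util h) (fun x bb => cumul _ r (extend h i0 x bb))).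
apply: eq_bigr => f _; congr (_ * _).
apply: eq_bigr => x _; rewrite copy_alg_pi; congr (_ * _).
rewrite expectD (expect_cst _ _ (advance_fdist _ _)) -(IH _ k rk) /adv_reward /=.
by congr (_ + _); apply: eq_expect => s; rewrite copy_hist_extend_self.
Qed.

Lemma adv_reward_bound s x : -1 <= adv_reward s x <= 1.
Proof.
rewrite /adv_reward; case: s.1.2 => [|r].
  by rewrite lerN10 ler01.
rewrite /value_util; set bb := s.2 x; set h := s.1.1.
have [_ [_ [alloc01 [price0b _]]]] := menu_valid h.
have /andP [a0 a1] := alloc01 bb; have /andP [p0 pb] := price0b bb.
have /andP [v0 v1] := v01 i0; have := b_le1 bb.
have : v i0 * (sigma h).1 bb <= (sigma h).1 bb by rewrite ler_piMl.
have : (sigma h).1 bb * b bb <= (sigma h).1 bb by rewrite ler_piMr.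
have : 0 <= v i0 * (sigma h).1 bb by apply: mulr_ge0.
move=> *; apply/andP; split; lra.
Qed.

Lemma copy_regret_le : cumul (fun h => round_avg h (regret_step h)) T [::] <= delta.
Proof.
rewrite -(expect_advance_regret T [::] T (leqnn T)).
rewrite -[delta](expect_cst _ _ (advance_fdist T [::])).
apply: ler_expect => [|s]; first exact: advance_fdist.
have := regret_to_le_exp_regret _ adv_reward _ y (M_alg _ (ltn_ord i0))
  adv_next_fdist T s [::] (fun _ => 0) 0.
rewrite subrr add0r => /le_trans; apply.
exact: M_no_regret _ _ _ _ _ adv_reward_bound adv_next_fdist.
Qed.

End CopyAdversary.

Lemma round_avg_regret_step (i0 : 'I_m) (y : 'I_(K + i0).+1) h :
  round_avg h (regret_step i0 y h) = q i0 *
    (\sum_bb cond h y bb * value_util i0 h bb - (v i0 * exp_alloc h i0 - exp_price h i0)).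
Proof.
rewrite /round_avg (bigD1 i0) //= [X in _ + X]big1 ?addr0 => [|i ne]; last first.
  rewrite /regret_step (negPf ne) big1 ?mulr0 // => x _.
  by rewrite big1 ?mulr0 // => bb _; rewrite mulr0.
rewrite /regret_step eqxx sum_pi_cond_bid; congr (_ * _).
set c := \sum_bb _ * value_util _ _ _.
under eq_bigr do rewrite mulrBr.
rewrite sumrB -mulr_suml (bid_dist_prob h _ (ltn_ord i0)).2 mul1r; congr (_ - _).
rewrite /exp_alloc /exp_price mulr_sumr -sumrB; apply: eq_bigr => bb _.
by rewrite /value_util; ring.
Qed.

Lemma value_arm_gain (i0 : 'I_m) j (jl : (K.+1 + j < (K + i0).+1)%N) h :
  \sum_bb cond h (Ordinal jl) bb * value_util i0 h bb =
  v i0 * exp_alloc h j - exp_price h j.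
Proof.
under eq_bigr do rewrite /= cond_value /value_util.
by rewrite /exp_alloc /exp_price mulr_sumr -sumrB; apply: eq_bigr => bb _; ring.
Qed.

Lemma zero_arm_gain (i0 : 'I_m) h :
  \sum_bb cond h (ord0 : 'I_(K + i0).+1) bb * value_util i0 h bb = 0.
Proof.
have [a0 [p0 _]] := menu_valid h.
rewrite (bigD1 ord0) //= big1 => [|bb ne].
  by rewrite /value_util a0 p0 mulr0 subr0 mulr0 addr0.
by rewrite -[0%N]/(nat_of_ord (ord0 : 'I_K.+1)) cond_bid eq_sym (negPf ne) mul0r.
Qed.

Lemma cumulB F G k h : cumul (fun h => F h - G h) k h = cumul F k h - cumul G k h.
Proof.
rewrite (eq_cumul _ (fun h => F h + -1 * G h)) => [|h']; last by rewrite mulN1r.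
by rewrite cumulD cumulZ mulN1r.
Qed.

Lemma cumul0 k h : cumul (fun _ => 0) k h = 0.
Proof.
by rewrite (eq_cumul _ (fun _ => 0 * 0)) ?cumulZ ?mul0r // => ?; rewrite mul0r.
Qed.

Lemma copy_gap_le (i0 : 'I_m) (y : 'I_(K + i0).+1) (G : seq (rnd R m K) -> R) :
  (forall h, \sum_bb cond h y bb * value_util i0 h bb = G h) ->
  q i0 * (cumul G T [::] - (v i0 * total_alloc i0 - total_price i0)) <= delta.
Proof.
move=> yG; have := copy_regret_le i0 y.
rewrite (eq_cumul _ (fun h => q i0 * (G h - (v i0 * exp_alloc h i0 - exp_price h i0)))).
  by rewrite cumulZ !cumulB cumulZ.
by move=> h; rewrite round_avg_regret_step yG.
Qed.

Lemma copy_ir (i : 'I_m) : q i * (total_price i - v i * total_alloc i) <= delta.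
Proof.
have := copy_gap_le i (ord0 : 'I_(K + i).+1) _ (zero_arm_gain i).
by rewrite cumul0 sub0r opprB.
Qed.

Lemma copy_ic (i : 'I_m) j : (j < i)%N ->
  q i * (v i * total_alloc j - total_price j - (v i * total_alloc i - total_price i))
    <= delta.
Proof.
move=> ji; have jl : (K.+1 + j < (K + i).+1)%N by rewrite addSn ltnS ltn_add2l.
have := copy_gap_le i (Ordinal jl) _ (value_arm_gain i j jl).
by rewrite cumulB cumulZ.
Qed.

Lemma exp_rev_le_mye (qmin mye : R) :
  (forall i j : 'I_m, (i < j)%N -> v i < v j) ->
  0 < qmin -> (forall i, qmin <= q i) -> 0 <= delta ->
  (forall p, p * prob_ge v q p <= mye) ->
  exp_rev v q M sigma T [::] <= T%:R * mye + m%:R * (delta / qmin).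
Proof.
move=> v_incr qmin0 qmin_le delta0 mye_ub; rewrite exp_rev_total_price.
apply: (approx_ic_revenue_le v q (fun i : 'I_m => total_alloc i)
  (fun i : 'I_m => total_price i)) => //.
- by have := mye_ub 0; rewrite mul0r.
- by rewrite divr_ge0 // ltW.
- by move=> i; have /andP [] := v01 i.
- by move=> i; rewrite total_alloc_le.
- by move=> i; exact: ler_pdivr_min qmin0 (qmin_le i) delta0 (copy_ir i).
- by move=> i j ji; exact: ler_pdivr_min qmin0 (qmin_le i) delta0 (copy_ic _ _ ji).
- by move=> k; rewrite -(prob_ge_value v q k v_incr).
Qed.

End Buyer.

Lemma copy_arms_range {m : nat} (K : nat) (i : 'I_m) : (K < (K + i).+1 <= K + m)%N.
Proof. by rewrite ltnS leq_addr ltn_add2l ltn_ord. Qed.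

Theorem theoremA1 (R : realFieldType) (m K T : nat) (v q : 'I_m -> R)
    (b : 'I_K.+1 -> R) (M : forall n, bandit_alg R n) (delta : R)
    (sigma : seq (rnd R m K) -> ('I_K.+1 -> R) * ('I_K.+1 -> R))
    (qmin mye : R) :
  (forall i, 0 <= v i <= 1) ->
  (forall i j : 'I_m, (i < j)%N -> v i < v j) ->
  (forall i, 0 < q i) -> \sum_(i < m) q i = 1 ->
  b ord0 = 0 -> (forall i j : 'I_K.+1, (i < j)%N -> b i < b j) ->
  (forall i, b i <= 1) ->
  (forall h, valid_menu b (sigma h)) ->
  (forall n, (K < n <= K + m)%N -> is_alg (M n) /\ no_regret T (M n) delta) ->
  is_min q qmin ->
  is_Mye v q mye ->
  exp_rev v q M sigma T [::] <= mye * T%:R + m%:R * delta / qmin.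
Proof.
move=> v01 v_incr q_gt0 q_sum1 _ _ b_le1 menu M_copies [[i1 ->] qmin_le] [_ mye_ub].
have copy_ok (i : 'I_m) := M_copies _ (copy_arms_range K i).
have M_alg i (im : (i < m)%N) := (copy_ok (Ordinal im)).1.
have q_ge0 i := ltW (q_gt0 i).
rewrite [mye * _]mulrC -mulrA.
apply: (exp_rev_le_mye v q M sigma M_alg q_ge0 q_sum1 v01 b_le1 menu) => //.
- by move=> i; exact: (copy_ok i).2.
- exact: (no_regret_ge0 ord0 (copy_ok i1).1 (copy_ok i1).2).
Qed.
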